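(* Let $n\ge2$. For any sign string $\sigma$, the closure of $L^n_\sigma$ in $\mathbb{R}^n$ satisfies $\overline{L^n_\sigma}=L^n_\sigma\cup\bigcup_{|\tau|>|\sigma|}L^n_\tau$, the union over sign strings $\tau$. In particular, for $m\ge2$, $\overline{L^n_{\sigma^m}}\cap\overline{L^n_{-\sigma^m}}=\bigcup_{|\tau|>m}L^n_\tau$.
   Context: Write $[n]=\{1,\dots,n\}$ and identify the signs $+,-$ with $+1,-1$. For $m\ge2$, $\sigma^m(j)=(-1)^j$ and $(-\sigma^m)(j)=(-1)^{j+1}$ for $j\in[m]$. A sign string is a function $\pm\sigma^m$, $m\ge2$, of length $|\sigma|=m$. An interval in $[n]$ is a set of consecutive integers; $J<J'$ means every element of $J$ is smaller than every element of $J'$. For $x\in\mathbb{R}^n$ let $t(x)=\min\{x_k-x_{k'}: k\text{ odd},\ k'\text{ even}\}$; $x$ is level if $t(x)=0$, and then $e(x)$ is the unique real with $x_k=e(x)=x_{k'}$ for some odd $k$ and even $k'$. A level point $x$ is of type $\sigma$ if there exist nonempty intervals $J_1<\dots<J_{|\sigma|}$ covering $[n]$ such that each $J_j$ contains some $k$ with $x_k=e(x)$, and $(-1)^k=\sigma(j)$ for all $k\in J_j$ with $x_k=e(x)$. $L^n_\sigma$ is the set of level points of type $\sigma$ in $\mathbb{R}^n$. *)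

From Stdlib Require Import Reals Lra Lia ZArith.
Open Scope R_scope.

(* A point of R^n is a function x : nat -> R of which only the coordinates
   x 1, ..., x n are relevant (indices k with 1 <= k <= n). All predicates
   below only inspect these coordinates. *)

(* Sign strings: a sign string is  +sigma^m  (neg = false) or -sigma^m
   (neg = true) with m >= 2; its value at j is (-1)^j resp. (-1)^(j+1). *)
Definition sgn_val (neg : bool) (j : nat) : Z :=
  if neg then ((-1) ^ Z.of_nat (j + 1))%Z else ((-1) ^ Z.of_nat j)%Z.

Definition parity_sign (k : nat) : Z := ((-1) ^ Z.of_nat k)%Z.

Definition in_range (n k : nat) : Prop := (1 <= k <= n)%nat.

(* t(x) = min { x_k - x_k' : k odd, k' even, k,k' in [n] };
   x is level iff t(x) = 0, i.e. all these differences are >= 0 and one of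
   them equals 0. *)
Definition t_ge0 (n : nat) (x : nat -> R) : Prop :=
  forall k k', in_range n k -> in_range n k' -> Nat.odd k = true ->
    Nat.even k' = true -> x k - x k' >= 0.

Definition level (n : nat) (x : nat -> R) : Prop :=
  t_ge0 n x /\
  exists k k', in_range n k /\ in_range n k' /\ Nat.odd k = true /\
    Nat.even k' = true /\ x k - x k' = 0.

Definition is_level_value (n : nat) (x : nat -> R) (e : R) : Prop :=
  exists k k', in_range n k /\ in_range n k' /\ Nat.odd k = true /\
    Nat.even k' = true /\ x k = e /\ x k' = e.

(* Nonempty intervals J_1 < ... < J_m covering [n] are encoded by breakpoints
   b 0 = 0 < b 1 < ... < b m = n, with J_j = { k | b (j-1) < k <= b j }. *)
Definition breakpoints (n m : nat) (b : nat -> nat) : Prop :=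
  b 0%nat = 0%nat /\ b m = n /\ (forall j, (j < m)%nat -> (b j < b (S j))%nat).

Definition L (n : nat) (neg : bool) (m : nat) (x : nat -> R) : Prop :=
  level n x /\
  exists e, is_level_value n x e /\
  exists b, breakpoints n m b /\
    forall j, (1 <= j <= m)%nat ->
      (exists k, (b (j - 1) < k <= b j)%nat /\ x k = e) /\
      (forall k, (b (j - 1) < k <= b j)%nat -> x k = e ->
         parity_sign k = sgn_val neg j).

Definition closure (n : nat) (S : (nat -> R) -> Prop) (x : nat -> R) : Prop :=
  forall eps, eps > 0 -> exists y, S y /\
    forall k, in_range n k -> Rabs (x k - y k) < eps.

From Stdlib Require Import Reals Lra Lia ZArith List Bool.
Open Scope R_scope.

(* The closure of L_sigma is the set of points x with t(x) >= 0 that carry a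
   sigma-chain: positions a_1 < ... < a_m in [n] at which x takes one common
   value e, with (-1)^(a_j) = sigma(j).  A point close enough to x can break
   ties among the coordinates of x but never reverse a strict inequality, so a
   chain of a nearby point of type sigma is a chain of x; conversely, moving every other coordinate equal to e
   slightly off e (odd ones up, even ones down) gives points of type sigma
   arbitrarily close to x.
   A level point of type tau carries a sigma-chain iff |sigma| < |tau| or
   sigma = tau: consecutive chain positions have opposite signs, so they lie in
   strictly increasing intervals of the partition of type tau.  Finally every
   level point has a type, obtained by grouping its level positions into
   maximal runs of equal parity. *)

Lemma parity_sign_S k : parity_sign (S k) = (- parity_sign k)%Z.
Proof. unfold parity_sign. rewrite Nat2Z.inj_succ, Z.pow_succ_r by lia. ring. Qed.

Lemma parity_sign_odd k : parity_sign k = (if Nat.odd k then -1 else 1)%Z.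
Proof.
  induction k as [|k IH]; [reflexivity|].
  rewrite parity_sign_S, IH, Nat.odd_succ, <- Nat.negb_odd.
  destruct (Nat.odd k); reflexivity.
Qed.

Lemma parity_sign_opp k k' : parity_sign k' = (- parity_sign k)%Z ->
  (Nat.odd k = true /\ Nat.even k' = true) \/ (Nat.odd k' = true /\ Nat.even k = true).
Proof.
  rewrite !parity_sign_odd, <- !Nat.negb_odd.
  destruct (Nat.odd k), (Nat.odd k'); simpl; intros H; try discriminate; auto.
Qed.

Lemma sgn_val_true j : sgn_val true j = parity_sign (S j).
Proof. unfold sgn_val, parity_sign. now rewrite Nat.add_1_r. Qed.

Lemma sgn_val_negb neg j : sgn_val (negb neg) j = (- sgn_val neg j)%Z.
Proof.
  destruct neg; cbn [negb]; rewrite sgn_val_true, parity_sign_S;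
    change (sgn_val false j) with (parity_sign j); lia.
Qed.

Lemma sgn_val_S neg j : sgn_val neg (S j) = sgn_val (negb neg) j.
Proof.
  rewrite sgn_val_negb.
  destruct neg; rewrite ?sgn_val_true, !parity_sign_S;
    change (sgn_val false ?i) with (parity_sign i); rewrite ?parity_sign_S; lia.
Qed.

Lemma sgn_val_pm neg j : sgn_val neg j = 1%Z \/ sgn_val neg j = (-1)%Z.
Proof.
  destruct neg; [rewrite sgn_val_true|change (sgn_val false j) with (parity_sign j)];
    rewrite parity_sign_odd; destruct Nat.odd; auto.
Qed.

Lemma sgn_val_1_inj neg s : sgn_val neg 1 = sgn_val s 1 -> neg = s.
Proof. destruct neg, s; easy. Qed.

Lemma sgn_val_1_surj k : exists s, sgn_val s 1 = parity_sign k.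
Proof.
  rewrite parity_sign_odd.
  destruct (Nat.odd k); [exists false | exists true]; reflexivity.
Qed.

Lemma parity_sign_other k s r :
  parity_sign k <> sgn_val s r -> parity_sign k = sgn_val s (S r).
Proof.
  rewrite sgn_val_S, sgn_val_negb, parity_sign_odd.
  pose proof (sgn_val_pm s r). destruct (Nat.odd k); lia.
Qed.

Lemma finite_choice (P : nat -> nat -> Prop) m :
  (forall j, (j <= m)%nat -> exists k, P j k) ->
  exists f, forall j, (j <= m)%nat -> P j (f j).
Proof.
  induction m as [|m IH]; intros H.
  - destruct (H 0%nat (le_n _)) as [k Hk].
    exists (fun _ => k). intros j Hj. replace j with 0%nat by lia. exact Hk.
  - destruct IH as [f Hf]; [intros; apply H; lia|].
    destruct (H (S m) (le_n _)) as [k Hk].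
    exists (fun j => if (j =? S m)%nat then k else f j). intros j Hj.
    destruct (Nat.eqb_spec j (S m)) as [->|]; [exact Hk | apply Hf; lia].
Qed.

Lemma increasing_lt (m : nat) (a : nat -> nat) :
  (forall j, (1 <= j < m)%nat -> (a j < a (S j))%nat) ->
  forall i j, (1 <= i < j)%nat -> (j <= m)%nat -> (a i < a j)%nat.
Proof.
  intros Hinc i j Hij Hj. induction j as [|j IH]; [lia|].
  destruct (Nat.eq_dec i j) as [->|]; [apply Hinc; lia|].
  specialize (IH ltac:(lia) ltac:(lia)). specialize (Hinc j ltac:(lia)). lia.
Qed.

Lemma breakpoints_le n r b : breakpoints n r b ->
  forall i j, (i <= j <= r)%nat -> (b i <= b j)%nat.
Proof.
  intros (_ & _ & Hinc) i j Hij. induction j as [|j IH]; [replace i with 0%nat by lia; lia|].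
  destruct (Nat.eq_dec i (S j)) as [->|]; [lia|].
  specialize (IH ltac:(lia)). specialize (Hinc j ltac:(lia)). lia.
Qed.

Lemma block_of n r b k : breakpoints n r b -> (1 <= k <= n)%nat ->
  exists j, (1 <= j <= r)%nat /\ (b (j - 1) < k <= b j)%nat.
Proof.
  intros (Hb0 & Hbr & _) Hk.
  assert (H : forall j, (j <= r)%nat -> (k <= b j)%nat ->
            exists i, (1 <= i <= j)%nat /\ (b (i - 1) < k <= b i)%nat).
  { induction j as [|j IH]; intros Hj Hkj; [lia|].
    destruct (le_lt_dec k (b j)) as [Hle|Hlt].
    - destruct (IH ltac:(lia) Hle) as (i & Hi & Hki). exists i. split; [lia|exact Hki].
    - exists (S j). simpl. rewrite Nat.sub_0_r. lia. }
  destruct (H r (le_n _) ltac:(lia)) as (j & Hj & Hkj). exists j. split; [lia|exact Hkj].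
Qed.

Lemma block_index_le n r b k k' j j' : breakpoints n r b ->
  (1 <= j <= r)%nat -> (1 <= j' <= r)%nat ->
  (b (j - 1) < k <= b j)%nat -> (b (j' - 1) < k' <= b j')%nat -> (k <= k')%nat ->
  (j <= j')%nat.
Proof.
  intros Hb Hj Hj' Hk Hk' Hkk'. destruct (le_lt_dec j j') as [|Hlt]; [assumption|].
  pose proof (breakpoints_le n r b Hb j' (j - 1) ltac:(lia)). lia.
Qed.

Lemma level_value_unique n x e e' : t_ge0 n x ->
  is_level_value n x e -> is_level_value n x e' -> e = e'.
Proof.
  intros Hx (k1 & k1' & R1 & R1' & O1 & E1 & X1 & X1') (k2 & k2' & R2 & R2' & O2 & E2 & X2 & X2').
  pose proof (Hx k1 k2' R1 R2' O1 E2). pose proof (Hx k2 k1' R2 R1' O2 E1). lra.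
Qed.

Lemma level_of_level_value n x e : t_ge0 n x -> is_level_value n x e -> level n x.
Proof.
  intros Hx (k & k' & R & R' & O & E & X & X').
  split; [exact Hx|]. exists k, k'. repeat split; try apply R; try apply R'; auto; lra.
Qed.

Lemma level_value_bounds n x e k : t_ge0 n x -> is_level_value n x e -> in_range n k ->
  (Nat.odd k = true -> e <= x k) /\ (Nat.even k = true -> x k <= e).
Proof.
  intros Hx (ko & ke & Ro & Re & Oo & Ee & Xo & Xe) Hk. split; intros Hpar.
  - pose proof (Hx k ke Hk Re Hpar Ee). lra.
  - pose proof (Hx ko k Ro Hk Oo Hpar). lra.
Qed.

Definition sign_chain (n : nat) (x : nat -> R) (e : R) (neg : bool) (m : nat)
    (a : nat -> nat) : Prop :=
  (forall j, (1 <= j < m)%nat -> (a j < a (S j))%nat) /\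
  (forall j, (1 <= j <= m)%nat ->
     in_range n (a j) /\ x (a j) = e /\ parity_sign (a j) = sgn_val neg j).

Lemma chain_level_value n x e neg m a : (2 <= m)%nat ->
  sign_chain n x e neg m a -> is_level_value n x e.
Proof.
  intros Hm [_ Hpts].
  destruct (Hpts 1%nat ltac:(lia)) as (R1 & X1 & S1).
  destruct (Hpts 2%nat ltac:(lia)) as (R2 & X2 & S2).
  rewrite sgn_val_S, sgn_val_negb, <- S1 in S2.
  destruct (parity_sign_opp _ _ S2) as [[O E] | [O E]];
    [exists (a 1%nat), (a 2%nat) | exists (a 2%nat), (a 1%nat)]; tauto.
Qed.

Lemma sign_chain_shorter n x e neg neg' m m' a : (m < m')%nat ->
  sign_chain n x e neg' m' a -> exists a', sign_chain n x e neg m a'.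
Proof.
  intros Hlt [Hinc Hpts]. destruct (bool_dec neg neg') as [->|Hne].
  - exists a. split; intros j Hj; [apply Hinc | apply Hpts]; lia.
  - exists (fun j => a (S j)). split; intros j Hj; [apply Hinc; lia|].
    destruct (Hpts (S j) ltac:(lia)) as (R & X & Sg). rewrite sgn_val_S in Sg.
    replace neg with (negb neg') by (destruct neg, neg'; simpl; congruence). auto.
Qed.

Definition blocks_of_type (x : nat -> R) (e : R) (neg : bool) (m : nat) (b : nat -> nat) : Prop :=
  forall j, (1 <= j <= m)%nat ->
    (exists k, (b (j - 1) < k <= b j)%nat /\ x k = e) /\
    (forall k, (b (j - 1) < k <= b j)%nat -> x k = e -> parity_sign k = sgn_val neg j).

Lemma blocks_chain n m b x e s : breakpoints n m b -> blocks_of_type x e s m b ->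
  exists a, sign_chain n x e s m a.
Proof.
  intros Hb Hty.
  destruct (finite_choice
              (fun j k => (1 <= j)%nat -> (b (j - 1) < k <= b j)%nat /\ x k = e) m)
    as [a Ha].
  { intros [|j] Hj; [exists 0%nat; intros; lia|].
    destruct (proj1 (Hty (S j) ltac:(lia))) as [k Hk]. exists k. auto. }
  exists a. split.
  - intros j Hj. destruct (Ha j ltac:(lia) ltac:(lia)) as [[_ H1] _].
    destruct (Ha (S j) ltac:(lia) ltac:(lia)) as [[H2 _] _].
    simpl in H2. rewrite Nat.sub_0_r in H2. lia.
  - intros j Hj. destruct (Ha j ltac:(lia) ltac:(lia)) as [Hk Hx].
    pose proof (breakpoints_le n m b Hb j m ltac:(lia)). destruct Hb as (_ & Hbm & _).
    split; [unfold in_range; lia|]. split; [exact Hx|]. exact (proj2 (Hty j Hj) _ Hk Hx).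
Qed.

Lemma chain_blocks_increase n r b x e s neg m a i j j' :
  breakpoints n r b -> blocks_of_type x e s r b -> sign_chain n x e neg m a ->
  (1 <= i < m)%nat -> (1 <= j <= r)%nat -> (1 <= j' <= r)%nat ->
  (b (j - 1) < a i <= b j)%nat -> (b (j' - 1) < a (S i) <= b j')%nat -> (j < j')%nat.
Proof.
  intros Hb Hty [Hinc Hpts] Hi Hj Hj' Hai Hai'.
  assert (j <= j')%nat.
  { apply (block_index_le n r b (a i) (a (S i))); auto. apply Nat.lt_le_incl, Hinc. lia. }
  destruct (Nat.eq_dec j j') as [<-|]; [exfalso|lia].
  destruct (Hpts i ltac:(lia)) as (_ & Hx & Hsg).
  destruct (Hpts (S i) ltac:(lia)) as (_ & Hx' & Hsg').
  pose proof (proj2 (Hty j Hj) _ Hai Hx). pose proof (proj2 (Hty j Hj) _ Hai' Hx').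
  rewrite sgn_val_S, sgn_val_negb in Hsg'. pose proof (sgn_val_pm neg i). lia.
Qed.

Lemma chain_length_le_blocks n r b x e s neg m a : (1 <= m)%nat ->
  breakpoints n r b -> blocks_of_type x e s r b -> sign_chain n x e neg m a ->
  (m <= r)%nat /\ (m = r -> neg = s).
Proof.
  intros Hm Hb Hty Ha.
  assert (Hblock : forall i, (1 <= i <= m)%nat ->
            exists j, (1 <= j <= r)%nat /\ (b (j - 1) < a i <= b j)%nat).
  { intros i Hi. apply (block_of n r b); [exact Hb | apply (proj2 Ha i Hi)]. }
  destruct (Hblock 1%nat ltac:(lia)) as (j1 & Hj1 & Ha1).
  assert (Hprog : forall i, (1 <= i <= m)%nat -> forall j, (1 <= j <= r)%nat ->
            (b (j - 1) < a i <= b j)%nat -> (j1 + i - 1 <= j)%nat).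
  { induction i as [|i IH]; intros Hi j Hj Hai; [lia|].
    destruct (Nat.eq_dec i 0) as [->|Hi0].
    - pose proof (block_index_le n r b (a 1%nat) (a 1%nat) j1 j Hb Hj1 Hj Ha1 Hai). lia.
    - destruct (Hblock i ltac:(lia)) as (j0 & Hj0 & Ha0).
      specialize (IH ltac:(lia) j0 Hj0 Ha0).
      pose proof (chain_blocks_increase n r b x e s neg m a i j0 j Hb Hty Ha). lia. }
  destruct (Hblock m ltac:(lia)) as (jm & Hjm & Ham).
  specialize (Hprog m ltac:(lia) jm Hjm Ham).
  split; [lia|]. intros <-. replace j1 with 1%nat in Ha1 by lia.
  destruct (proj2 Ha 1%nat ltac:(lia)) as (_ & Hx & Hsg).
  apply sgn_val_1_inj. rewrite <- Hsg. exact (proj2 (Hty 1%nat ltac:(lia)) _ Ha1 Hx).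
Qed.

Definition set_tail (b : nat -> nat) (r q : nat) (j : nat) : nat :=
  if (j <? r)%nat then b j else q.

Lemma set_tail_lt b r q j : (j < r)%nat -> set_tail b r q j = b j.
Proof. intros H. unfold set_tail. now rewrite (proj2 (Nat.ltb_lt j r) H). Qed.

Lemma set_tail_ge b r q j : (r <= j)%nat -> set_tail b r q j = q.
Proof. intros H. unfold set_tail. now rewrite (proj2 (Nat.ltb_ge j r) H). Qed.

Lemma blocks_stretch x e s r p q b : (1 <= r)%nat -> (p <= q)%nat ->
  breakpoints p r b -> blocks_of_type x e s r b ->
  (forall k, (p < k <= q)%nat -> x k = e -> parity_sign k = sgn_val s r) ->
  breakpoints q r (set_tail b r q) /\ blocks_of_type x e s r (set_tail b r q).
Proof.
  intros Hr Hpq (Hb0 & Hbr & Hinc) Hty Hnew. split.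
  - split; [rewrite set_tail_lt; [exact Hb0 | lia]|].
    split; [apply set_tail_ge; lia|].
    intros j Hj. rewrite set_tail_lt by lia.
    destruct (Nat.eq_dec (S j) r) as [<-|]; rewrite ?set_tail_ge, ?set_tail_lt by lia;
      specialize (Hinc j Hj); lia.
  - intros j Hj. rewrite set_tail_lt by lia.
    destruct (Nat.eq_dec j r) as [->|]; [|rewrite set_tail_lt by lia; exact (Hty j Hj)].
    rewrite set_tail_ge by lia. destruct (Hty r Hj) as [[k Hk] Hpar]. split.
    + exists k. split; [lia | apply Hk].
    + intros k' Hk' Hx. destruct (le_lt_dec k' p); [apply Hpar; auto; lia | apply Hnew; auto; lia].
Qed.

Lemma blocks_snoc x e s r p q b : (p < q)%nat ->
  breakpoints p r b -> blocks_of_type x e s r b -> x q = e ->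
  (forall k, (p < k <= q)%nat -> x k = e -> parity_sign k = sgn_val s (S r)) ->
  breakpoints q (S r) (set_tail b (S r) q) /\ blocks_of_type x e s (S r) (set_tail b (S r) q).
Proof.
  intros Hpq (Hb0 & Hbr & Hinc) Hty Hq Hnew. split.
  - split; [rewrite set_tail_lt; [exact Hb0 | lia]|].
    split; [apply set_tail_ge; lia|].
    intros j Hj. rewrite set_tail_lt by lia.
    destruct (Nat.eq_dec j r) as [->|]; rewrite ?set_tail_ge, ?set_tail_lt by lia; [lia|].
    apply Hinc. lia.
  - intros j Hj. rewrite set_tail_lt by lia.
    destruct (Nat.eq_dec j (S r)) as [->|]; [|rewrite set_tail_lt by lia; apply Hty; lia].
    rewrite set_tail_ge by lia. simpl. rewrite Nat.sub_0_r, Hbr. split.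
    + exists q. split; [lia | exact Hq].
    + exact Hnew.
Qed.

Lemma prefix_partition x e p : exists s r b q, (q <= p)%nat /\
  breakpoints q r b /\ blocks_of_type x e s r b /\
  (forall k, (q < k <= p)%nat -> x k <> e).
Proof.
  induction p as [|p (s & r & b & q & Hq & Hb & Hty & Htail)].
  - exists false, 0%nat, (fun _ => 0%nat), 0%nat.
    repeat split; intros; lia.
  - destruct (Req_EM_T (x (S p)) e) as [He|He].
    2: { exists s, r, b, q. refine (conj (le_S _ _ Hq) (conj Hb (conj Hty _))). intros k Hk.
         destruct (Nat.eq_dec k (S p)) as [->|]; [exact He | apply Htail; lia]. }
    assert (Honly : forall k, (q < k <= S p)%nat -> x k = e -> k = S p).
    { intros k Hk Hxk. destruct (Nat.eq_dec k (S p)); [assumption|].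
      exfalso. apply (Htail k); [lia | exact Hxk]. }
    enough (exists s' r' b', breakpoints (S p) r' b' /\ blocks_of_type x e s' r' b')
      as (s' & r' & b' & Hb' & Hty') by (exists s', r', b', (S p); refine (conj (le_n _) (conj Hb' (conj Hty' _))); lia).
    destruct r as [|r].
    + assert (q = 0%nat) as -> by (destruct Hb as (Hb0 & Hbq & _); congruence).
      destruct (sgn_val_1_surj (S p)) as [s' Hs'].
      exists s', 1%nat, (set_tail b 1 (S p)).
      apply (blocks_snoc x e s' 0 0 (S p) b); [lia | exact Hb | intros j Hj; lia | exact He |].
      intros k Hk Hxk. rewrite (Honly k Hk Hxk). auto.
    + destruct (Z.eq_dec (parity_sign (S p)) (sgn_val s (S r))) as [Hpar|Hpar].
      * exists s, (S r), (set_tail b (S r) (S p)).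
        apply (blocks_stretch x e s (S r) q (S p) b); [lia | lia | exact Hb | exact Hty |].
        intros k Hk Hxk. rewrite (Honly k ltac:(lia) Hxk). exact Hpar.
      * exists s, (S (S r)), (set_tail b (S (S r)) (S p)).
        apply (blocks_snoc x e s (S r) q (S p) b); [lia | exact Hb | exact Hty | exact He |].
        intros k Hk Hxk. rewrite (Honly k Hk Hxk). now apply parity_sign_other.
Qed.

Lemma level_value_type n x e : t_ge0 n x -> is_level_value n x e ->
  exists s r, L n s r x.
Proof.
  intros Hx He. pose proof (level_of_level_value n x e Hx He) as Hlev.
  destruct (prefix_partition x e n) as (s & r & b & q & Hq & Hb & Hty & Htail).
  destruct r as [|r].
  - destruct Hb as (Hb0 & Hbq & _). destruct He as (k & _ & Hk & _ & _ & _ & Hxk & _).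
    exfalso. apply (Htail k); [unfold in_range in Hk; lia | exact Hxk].
  - destruct (blocks_stretch x e s (S r) q n b) as [Hb' Hty'];
      [lia | exact Hq | exact Hb | exact Hty | |].
    { intros k Hk Hxk. exfalso. exact (Htail k Hk Hxk). }
    exists s, (S r). split; [exact Hlev|].
    exists e. split; [exact He|]. exists (set_tail b (S r) n). auto.
Qed.

Lemma chain_breakpoints n m a : (1 <= m)%nat ->
  (forall j, (1 <= j < m)%nat -> (a j < a (S j))%nat) ->
  (forall j, (1 <= j <= m)%nat -> in_range n (a j)) ->
  exists b, breakpoints n m b /\
    forall i j, (1 <= i <= m)%nat -> (1 <= j <= m)%nat ->
      ((b (j - 1) < a i <= b j)%nat <-> i = j).
Proof.
  intros Hm Hinc Hrange. pose proof (increasing_lt m a Hinc) as Hlt.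
  pose (b j := if (j =? 0)%nat then 0%nat else set_tail a m n j). exists b.
  assert (Hb : forall j, (1 <= j < m)%nat -> b j = a j).
  { intros j Hj. unfold b. rewrite (proj2 (Nat.eqb_neq j 0)) by lia. apply set_tail_lt. lia. }
  assert (Hb0 : b 0%nat = 0%nat) by reflexivity.
  assert (Hbm : b m = n).
  { unfold b. rewrite (proj2 (Nat.eqb_neq m 0)) by lia. apply set_tail_ge. lia. }
  assert (Hmem : forall j, (1 <= j <= m)%nat -> (b (j - 1) < a j <= b j)%nat).
  { intros j Hj. pose proof (Hrange j Hj) as Hr. unfold in_range in Hr. split.
    - destruct (Nat.eq_dec j 1) as [->|]; [simpl; rewrite Hb0; lia|].
      rewrite Hb by lia. apply Hlt; lia.
    - destruct (Nat.eq_dec j m) as [->|]; [rewrite Hbm; lia | rewrite Hb; lia]. }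
  split.
  - split; [exact Hb0|]. split; [exact Hbm|].
    intros j Hj. destruct (Nat.eq_dec j 0) as [->|].
    + pose proof (Hmem 1%nat ltac:(lia)). simpl in *. lia.
    + pose proof (Hmem j ltac:(lia)). pose proof (Hmem (S j) ltac:(lia)).
      simpl in *. rewrite Nat.sub_0_r in *. lia.
  - intros i j Hi Hj. split; [|intros ->; exact (Hmem j Hj)].
    intros Hij. destruct (lt_eq_lt_dec i j) as [[Hlt_ij|]|Hgt]; [exfalso| assumption |exfalso].
    + rewrite (Hb (j - 1)%nat) in Hij by lia.
      assert (a i <= a (j - 1))%nat; [|lia].
      destruct (Nat.eq_dec i (j - 1)) as [->|]; [lia | apply Nat.lt_le_incl, Hlt; lia].
    + rewrite (Hb j) in Hij by lia. pose proof (Hlt j i ltac:(lia) ltac:(lia)). lia.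
Qed.

Section Perturbation.

Variables (n m : nat) (neg : bool) (x : nat -> R) (e eps : R) (a : nat -> nat).
Hypotheses (Hm : (2 <= m)%nat) (Hx : t_ge0 n x) (Ha : sign_chain n x e neg m a)
  (Heps : 0 < eps).

Definition on_chain (k : nat) : bool := existsb (fun j => (a j =? k)%nat) (seq 1 m).

Lemma on_chain_spec k : on_chain k = true <-> exists j, (1 <= j <= m)%nat /\ a j = k.
Proof.
  unfold on_chain. rewrite existsb_exists. split.
  - intros (j & Hj & E). apply in_seq in Hj. apply Nat.eqb_eq in E. exists j. split; [lia | exact E].
  - intros (j & Hj & E). exists j. split; [apply in_seq; lia | now apply Nat.eqb_eq].
Qed.

Definition perturb (k : nat) : R :=
  if on_chain k then x k
  else if Req_EM_T (x k) e then (if Nat.odd k then e + eps else e - eps) else x k.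

Lemma perturb_dist k : Rabs (x k - perturb k) <= eps.
Proof.
  unfold perturb. destruct (on_chain k); [|destruct (Req_EM_T (x k) e) as [->|]];
    [| destruct (Nat.odd k) |]; apply Rabs_le; lra.
Qed.

Lemma perturb_on_chain j : (1 <= j <= m)%nat -> perturb (a j) = e.
Proof.
  intros Hj. unfold perturb.
  replace (on_chain (a j)) with true by (symmetry; apply on_chain_spec; eauto).
  apply (proj2 Ha j Hj).
Qed.

Lemma perturb_eq_e k : perturb k = e -> exists j, (1 <= j <= m)%nat /\ a j = k.
Proof.
  unfold perturb. destruct (on_chain k) eqn:E; [intros _; now apply on_chain_spec|].
  destruct (Req_EM_T (x k) e); [destruct (Nat.odd k); intros; lra | intros; contradiction].
Qed.

Lemma perturb_chain : sign_chain n perturb e neg m a.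
Proof.
  destruct Ha as [Hinc Hpts]. split; [exact Hinc|]. intros j Hj.
  destruct (Hpts j Hj) as (R & _ & Sg). exact (conj R (conj (perturb_on_chain j Hj) Sg)).
Qed.

Lemma perturb_t_ge0 : t_ge0 n perturb.
Proof.
  pose proof (chain_level_value n x e neg m a Hm Ha) as Hlv.
  assert (Hodd : forall k, in_range n k -> Nat.odd k = true -> e <= perturb k).
  { intros k Hk Ho. destruct (level_value_bounds n x e k Hx Hlv Hk) as [Hle _]. unfold perturb.
    destruct (on_chain k); [auto|]. destruct (Req_EM_T (x k) e); [rewrite Ho; lra | auto]. }
  assert (Heven : forall k, in_range n k -> Nat.even k = true -> perturb k <= e).
  { intros k Hk Hev. destruct (level_value_bounds n x e k Hx Hlv Hk) as [_ Hle].
    assert (Nat.odd k = false) as Ho by (rewrite <- Nat.negb_even, Hev; reflexivity).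
    unfold perturb. destruct (on_chain k); [auto|].
    destruct (Req_EM_T (x k) e); [rewrite Ho; lra | auto]. }
  intros k k' Hk Hk' Ho Hev. pose proof (Hodd k Hk Ho). pose proof (Heven k' Hk' Hev). lra.
Qed.

Lemma perturb_L : L n neg m perturb.
Proof.
  pose proof (chain_level_value n perturb e neg m a Hm perturb_chain) as Hlv.
  split; [exact (level_of_level_value n perturb e perturb_t_ge0 Hlv)|].
  exists e. split; [exact Hlv|].
  destruct Ha as [Hinc Hpts].
  destruct (chain_breakpoints n m a) as (b & Hb & Hblock);
    [lia | exact Hinc | intros j Hj; apply (Hpts j Hj) |].
  exists b. split; [exact Hb|]. intros j Hj. split.
  - exists (a j). split; [apply Hblock; auto | apply perturb_on_chain; auto].
  - intros k Hk Hpk. destruct (perturb_eq_e k Hpk) as (i & Hi & <-).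
    assert (i = j) as -> by (apply Hblock; auto). apply (Hpts j Hj).
Qed.

End Perturbation.

Lemma chain_closure n neg m x e a : (2 <= m)%nat -> t_ge0 n x ->
  sign_chain n x e neg m a -> closure n (L n neg m) x.
Proof.
  intros Hm Hx Ha eps Heps. exists (perturb m x e (eps / 2) a). split.
  - apply perturb_L; auto. lra.
  - intros k _. pose proof (perturb_dist m x e (eps / 2) a ltac:(lra) k). lra.
Qed.

Lemma separation_from_point (x : nat -> R) (c : R) (N : nat) :
  exists d, 0 < d /\ forall k, (k < N)%nat -> c <> x k -> d <= Rabs (c - x k).
Proof.
  induction N as [|N (d & Hd & H)].
  - exists 1. split; [lra | intros; lia].
  - destruct (Req_EM_T c (x N)) as [E|E].
    + exists d. split; [exact Hd|]. intros k Hk Hne.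
      destruct (Nat.eq_dec k N) as [->|]; [contradiction | apply H; auto; lia].
    + exists (Rmin d (Rabs (c - x N))).
      split; [apply Rmin_glb_lt; [exact Hd | apply Rabs_pos_lt; lra]|].
      intros k Hk Hne. destruct (Nat.eq_dec k N) as [->|]; [apply Rmin_r|].
      eapply Rle_trans; [apply Rmin_l | apply H; auto; lia].
Qed.

Lemma separation (x : nat -> R) (N : nat) :
  exists d, 0 < d /\ forall k k', (k < N)%nat -> (k' < N)%nat ->
    x k <> x k' -> d <= Rabs (x k - x k').
Proof.
  induction N as [|N (d & Hd & H)].
  - exists 1. split; [lra | intros; lia].
  - destruct (separation_from_point x (x N) N) as (d' & Hd' & H').
    exists (Rmin d d'). split; [apply Rmin_glb_lt; assumption|].
    intros k k' Hk Hk' Hne.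
    destruct (Nat.eq_dec k N) as [->|], (Nat.eq_dec k' N) as [->|].
    + contradiction.
    + eapply Rle_trans; [apply Rmin_r | apply H'; auto; lia].
    + rewrite Rabs_minus_sym. eapply Rle_trans; [apply Rmin_r | apply H'; auto; lia].
    + eapply Rle_trans; [apply Rmin_l | apply H; auto; lia].
Qed.

Lemma close_reflects_le (x y : nat -> R) (d : R) k k' :
  (x k <> x k' -> d <= Rabs (x k - x k')) ->
  Rabs (x k - y k) < d / 2 -> Rabs (x k' - y k') < d / 2 -> y k <= y k' -> x k <= x k'.
Proof.
  intros Hsep Hk Hk' Hy. destruct (Rle_or_lt (x k) (x k')) as [|Hlt]; [assumption|exfalso].
  specialize (Hsep ltac:(lra)). rewrite Rabs_pos_eq in Hsep by lra.
  apply Rabs_def2 in Hk as [], Hk' as []. lra.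
Qed.

Lemma closure_chain n neg m x : (1 <= m)%nat -> closure n (L n neg m) x ->
  t_ge0 n x /\ exists e a, sign_chain n x e neg m a.
Proof.
  intros Hm Hcl. destruct (separation x (S n)) as (d & Hd & Hsep).
  destruct (Hcl (d / 2) ltac:(lra)) as (y & [[Hy _] (e & _ & b & Hb & Hty)] & Hclose).
  destruct (blocks_chain n m b y e neg Hb Hty) as [a [Hinc Hpts]].
  assert (Hle : forall k k', in_range n k -> in_range n k' -> y k <= y k' -> x k <= x k').
  { intros k k' Hk Hk'. apply (close_reflects_le x y d); auto.
    apply Hsep; unfold in_range in *; lia. }
  split.
  - intros k k' Hk Hk' Ho Hev. pose proof (Hy k k' Hk Hk' Ho Hev).
    pose proof (Hle k' k Hk' Hk ltac:(lra)). lra.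
  - exists (x (a 1%nat)), a. split; [exact Hinc|]. intros j Hj.
    destruct (Hpts j Hj) as (Rj & Yj & Sj). destruct (Hpts 1%nat ltac:(lia)) as (R1 & Y1 & _).
    refine (conj Rj (conj _ Sj)). apply Rle_antisym; apply Hle; auto; lra.
Qed.

Lemma closure_L_iff n neg m x : (2 <= m)%nat ->
  closure n (L n neg m) x <-> t_ge0 n x /\ exists e a, sign_chain n x e neg m a.
Proof.
  intros Hm. split; [apply closure_chain; lia|].
  intros (Hx & e & a & Ha). exact (chain_closure n neg m x e a Hm Hx Ha).
Qed.

Lemma closure_has_type n neg m x : (2 <= m)%nat -> closure n (L n neg m) x ->
  exists s r, L n s r x.
Proof.
  intros Hm Hcl. apply closure_L_iff in Hcl as (Hx & e & a & Ha); [|exact Hm].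
  exact (level_value_type n x e Hx (chain_level_value n x e neg m a Hm Ha)).
Qed.

Lemma chain_iff_type n x s r neg m : (2 <= m)%nat -> L n s r x ->
  (exists e a, sign_chain n x e neg m a) <-> (m < r)%nat \/ (m = r /\ neg = s).
Proof.
  intros Hm [[Hx _] (e & He & b & Hb & Hty)]. split.
  - intros (e' & a & Ha).
    assert (e' = e) as ->.
    { apply (level_value_unique n x); [exact Hx | | exact He].
      exact (chain_level_value n x e' neg m a Hm Ha). }
    destruct (chain_length_le_blocks n r b x e s neg m a) as [Hle Heq]; auto; [lia|].
    destruct (Nat.eq_dec m r); [right; auto | left; lia].
  - intros Hmr. destruct (blocks_chain n r b x e s Hb Hty) as [a Ha]. exists e.
    destruct Hmr as [Hlt | [-> ->]]; [exact (sign_chain_shorter n x e neg s m r a Hlt Ha) | eauto].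
Qed.

Lemma closure_iff_type n x s r neg m : (2 <= m)%nat -> L n s r x ->
  closure n (L n neg m) x <-> (m < r)%nat \/ (m = r /\ neg = s).
Proof.
  intros Hm HL. rewrite closure_L_iff, <- (chain_iff_type n x s r neg m Hm HL) by exact Hm.
  split; [tauto|]. intros H. split; [exact (proj1 (proj1 HL)) | exact H].
Qed.

Theorem lemma1p10 (n : nat) (hn : (2 <= n)%nat) :
  (forall (neg : bool) (m : nat), (2 <= m)%nat ->
     forall x : nat -> R,
       closure n (L n neg m) x <->
       (L n neg m x \/ exists (neg' : bool) (m' : nat), (m < m')%nat /\ L n neg' m' x)) /\
  (forall m : nat, (2 <= m)%nat ->
     forall x : nat -> R,
       (closure n (L n false m) x /\ closure n (L n true m) x) <->
       exists (neg' : bool) (m' : nat), (m < m')%nat /\ L n neg' m' x).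
Proof.
  split.
  - intros neg m Hm x. split.
    + intros Hcl. destruct (closure_has_type n neg m x Hm Hcl) as (s & r & HL).
      rewrite (closure_iff_type n x s r neg m Hm HL) in Hcl.
      destruct Hcl as [Hlt | [<- <-]]; [right; exists s, r; auto | left; exact HL].
    + intros [HL | (s & r & Hlt & HL)];
        [apply (closure_iff_type n x neg m) | apply (closure_iff_type n x s r)]; auto.
  - intros m Hm x. split.
    + intros [Hf Ht]. destruct (closure_has_type n false m x Hm Hf) as (s & r & HL).
      rewrite (closure_iff_type n x s r false m Hm HL) in Hf.
      rewrite (closure_iff_type n x s r true m Hm HL) in Ht.
      exists s, r. split; [|exact HL].
      destruct Hf as [|[_ <-]], Ht as [|[_ Hs]]; auto; discriminate.
    + intros (s & r & Hlt & HL).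
      rewrite (closure_iff_type n x s r false m Hm HL), (closure_iff_type n x s r true m Hm HL).
      auto.
Qed.
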